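(* Let $p$ and $q$ be distinct primes and let $a,b$ be positive integers. Then \[ B(p^{a}q^{b}) \;\ge\; \min\{p^{a},\,q^{b}\}. \]
   Context: The height $H(f)$ of a polynomial $f\in\mathbb{Z}[x]$ is the maximum of the absolute values of its coefficients. For a positive integer $n$, $B(n)=\max\{H(f): f\in\mathbb{Z}[x],\ f \text{ divides } x^n-1 \text{ in } \mathbb{Z}[x]\}$. *)

From HB Require Import structures.
From mathcomp Require Import all_boot all_order all_algebra.
Set Implicit Arguments. Unset Strict Implicit. Unset Printing Implicit Defensive.
Import Order.TTheory GRing.Theory Num.Theory.

Definition height (f : {poly int}) : nat := \max_(i < size f) `|(f`_i)%R|%N.

Definition dvd_Zx (f g : {poly int}) : Prop := exists h : {poly int}, g = (f * h)%R.

(* B(n) >= m, i.e. some divisor of x^n - 1 in Z[x] has height >= m. *)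
Definition B_ge (n m : nat) : Prop :=
  exists f : {poly int}, dvd_Zx f ('X^n - 1)%R /\ (m <= height f)%N.

From mathcomp Require Import all_boot all_order all_algebra.
From mathcomp Require Import ring.
Set Implicit Arguments. Unset Strict Implicit. Unset Printing Implicit Defensive.
Import Order.TTheory GRing.Theory Num.Theory.

(* For coprime m and n, the product of the geometric sums
   (1 + x + ... + x^(m-1)) (1 + x + ... + x^(n-1)) divides x^(mn) - 1: indeed
   x^(mn) - 1 = (x - 1) (1 + ... + x^(m-1)) (1 + x^m + ... + x^(m(n-1))), and since
   i |-> m i mod n permutes [0, n), the last factor is congruent to
   1 + ... + x^(n-1) modulo x^n - 1.  The coefficient of x^(min(m,n) - 1) in this
   product is min(m,n). *)

Local Open Scope ring_scope.

Definition geom_sum (R : pzSemiRingType) (x : R) (n : nat) : R := \sum_(i < n) x ^+ i.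

Lemma modn_mul_inj (n m : nat) :
  coprime n m -> injective (fun i : 'I_n => (m * i) %% n)%N.
Proof.
move=> co_nm i j.
wlog le_ij : i j / (i <= j)%N.
  by move=> wlog_le; case: (leqP i j) => [/wlog_le//|/ltnW le_ji /esym/wlog_le->].
move=> /esym/eqP eq_mod.
have le_mij : (m * i <= m * j)%N by rewrite leq_mul2l le_ij orbT.
rewrite eqn_mod_dvd // -mulnBr Gauss_dvdr // in eq_mod.
have lt_ji : (j - i < n)%N by apply: leq_ltn_trans (leq_subr _ _) (ltn_ord j).
apply/val_inj/eqP; rewrite eqn_leq le_ij /= -subn_eq0 -(modn_small lt_ji).
exact: eq_mod.
Qed.

Section GeomSum.
Variable R : comPzRingType.
Implicit Types x : R.

Lemma subr_expr_modn x k n :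
  x ^+ k - x ^+ (k %% n) = (x ^+ n - 1) * \sum_(i < k %/ n) x ^+ (n * i + k %% n).
Proof.
rewrite {1}(divn_eq k n) exprD mulnC exprM -[X in _ - X]mul1r -mulrBl.
rewrite subrX1 -mulrA mulr_suml; congr (_ * _).
by apply: eq_bigr => i _; rewrite exprD exprM.
Qed.

Lemma geom_sum_dvd_sum_exprM x m n : coprime n m ->
  exists h, \sum_(i < n) x ^+ (m * i) = geom_sum x n * h.
Proof.
case: n => [_|n co_nm]; first by exists 0; rewrite big_ord0 mulr0.
pose r (i : 'I_n.+1) : 'I_n.+1 := Ordinal (ltn_pmod (m * i) (ltn0Sn n)).
have r_inj : injective r by move=> i j /(congr1 val) /modn_mul_inj ->.
pose h i := \sum_(k < (m * i) %/ n.+1) x ^+ (n.+1 * k + (m * i) %% n.+1).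
exists (1 + (x - 1) * \sum_(i < n.+1) h i).
have geom_sum_r : geom_sum x n.+1 = \sum_(i < n.+1) x ^+ r i.
  by rewrite /geom_sum (reindex_inj r_inj).
rewrite mulrDr mulr1 mulrA [_ * (x - 1)]mulrC -subrX1 geom_sum_r.
rewrite mulr_sumr -big_split /=; apply: eq_bigr => i _.
by rewrite -subr_expr_modn addrC subrK.
Qed.

Lemma geom_sumM_dvd_subrX1 x m n : coprime m n ->
  exists h, x ^+ (m * n) - 1 = geom_sum x m * geom_sum x n * h.
Proof.
rewrite coprime_sym => /(geom_sum_dvd_sum_exprM x) [h sum_eq].
exists ((x - 1) * h).
rewrite exprM subrX1 [_ ^+ m - 1]subrX1 -/(geom_sum x m).
under eq_bigr do rewrite -exprM.
by rewrite sum_eq -/(geom_sum x m); ring.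
Qed.

End GeomSum.

Lemma coef_geom_sumX (R : nzRingType) (n k : nat) :
  (geom_sum ('X : {poly R}) n)`_k = (k < n)%N%:R.
Proof.
rewrite /geom_sum; elim: n => [|n IH]; first by rewrite big_ord0 coef0.
rewrite big_ord_recr /= coefD IH coefXn [in RHS]ltnS [in RHS]leq_eqVlt.
by case: (ltngtP k n) => //= _; rewrite ?addr0 ?add0r.
Qed.

Lemma coef_geom_sumXM (R : nzRingType) (m n k : nat) : (k < m)%N -> (k < n)%N ->
  (geom_sum ('X : {poly R}) m * geom_sum 'X n)`_k = k.+1%:R.
Proof.
move=> lt_km lt_kn; rewrite coefM -[in RHS](card_ord k.+1) -sumr_const.
apply: eq_bigr => j _; rewrite !coef_geom_sumX.
have le_jk : (j <= k)%N by rewrite -ltnS.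
by rewrite (leq_ltn_trans le_jk lt_km) (leq_ltn_trans (leq_subr _ _) lt_kn) mulr1.
Qed.

Lemma coef_le_height (f : {poly int}) (i : nat) : (`|(f`_i)%R|%N <= height f)%N.
Proof.
have [lt_if|?] := ltnP i (size f); last by rewrite nth_default.
exact: (@leq_bigmax_cond _ xpredT (fun j : 'I_(size f) => absz f`_j) (Ordinal lt_if)).
Qed.

Lemma B_ge_coprime (m n : nat) : coprime m n -> B_ge (m * n) (minn m n).
Proof.
move=> co_mn.
have [h Xmn_eq] := geom_sumM_dvd_subrX1 ('X : {poly int}) co_mn.
exists (geom_sum 'X m * geom_sum 'X n); split; first by exists h.
have [-> //|min_gt0] := posnP (minn m n).
apply: leq_trans (coef_le_height _ (minn m n).-1).
by rewrite coef_geom_sumXM prednK ?natz ?geq_minl ?geq_minr.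
Qed.

Theorem mainTheorem2 (p q a b : nat) :
  prime p -> prime q -> p != q -> (0 < a)%N -> (0 < b)%N ->
  B_ge (p ^ a * q ^ b) (minn (p ^ a) (q ^ b)).
Proof.
move=> p_pr q_pr p_neq_q a_gt0 b_gt0.
apply: B_ge_coprime.
by rewrite coprime_pexpl // coprime_pexpr // prime_coprime // dvdn_prime2.
Qed.
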